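(* Let $\xi\in\mathbb{R}\setminus\{0\}$. (i) If either $|B|\ge|B|_c$, or $|B|<|B|_c$ and $|\xi|\le|\xi|^B_{vc}$, then $\alpha(s)\ge0$ for every $s\ge0$. (ii) If $|B|<|B|_c$ and $|\xi|>|\xi|^B_{vc}$, then there exists $s_0>0$ depending on $\rho_\pm,\mu_\pm,g,|B|,|\xi|$ such that $\alpha(s)<0$ for all $0<s\le s_0$.
   Context: $g>0$, $\rho_+>\rho_->0$, $[\rho]=\rho_+-\rho_-$, $\mu_\pm>0$, $B\ne0$; $\rho,\mu$ equal $\rho_+,\mu_+$ on $(0,1)$ and $\rho_-,\mu_-$ on $(-1,0)$. For $s\ge0$ and $\psi\in H_0^2((-1,1))$: $E_s(\psi)=\frac12\int_{-1}^1\big[s\mu(4\xi^2|\psi'|^2+|\xi^2\psi+\psi''|^2)+|B|^2(\xi^2|\psi'|^2+|\psi''|^2)\big]dx_2-\frac12\xi^2g[\rho]\psi(0)^2$, $J(\psi)=\frac12\int_{-1}^1\rho(\xi^2|\psi|^2+|\psi'|^2)dx_2$, $\alpha(s)=\inf\{E_s(\psi):\psi\in H_0^2((-1,1)),J(\psi)=1\}$. $|B|_c^2:=\sup\{g[\rho]\psi(0)^2/\int_{-1}^1|\psi'|^2: 0\ne\psi\in H_0^1((-1,1))\}$; for $|B|<|B|_c$, $(|\xi|^B_{vc})^2:=\inf\{|B|^2\int|\psi''|^2/(g[\rho]\psi(0)^2-|B|^2\int|\psi'|^2):\psi\in H_0^2((-1,1)),\ g[\rho]\psi(0)^2-|B|^2\int|\psi'|^2>0\}$.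 *)

From HB Require Import structures.
From mathcomp Require Import all_boot all_order all_algebra.
From mathcomp Require Import all_classical all_reals all_analysis.
Set Implicit Arguments. Unset Strict Implicit. Unset Printing Implicit Defensive.
Import Order.TTheory GRing.Theory Num.Theory.
Import numFieldNormedType.Exports.
Local Open Scope classical_set_scope.
Local Open Scope ring_scope.

Section Defs.
Variable R : realType.
Let mu := (@lebesgue_measure R).

Definition Rint (a b : R) (f : R -> R) : R := Rintegral mu `[a, b] f.

(* Sobolev space H^1_0((-1,1)) in one dimension: psi is absolutely continuous
   with weak derivative psi1 in L^2(-1,1), and psi(-1) = psi(1) = 0. *)
Definition H01 (psi psi1 : R -> R) : Prop :=
  mu.-integrable `[-1, 1] (EFin \o psi1) /\
  mu.-integrable `[-1, 1] (fun x => (psi1 x ^+ 2)%:E) /\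
  (forall x, -1 <= x <= 1 -> psi x = Rint (-1) x psi1) /\
  psi 1 = 0.

(* Sobolev space H^2_0((-1,1)): psi, psi1 = psi' absolutely continuous,
   psi2 = psi'' in L^2(-1,1), psi(+-1) = psi'(+-1) = 0. *)
Definition H02 (psi psi1 psi2 : R -> R) : Prop :=
  mu.-integrable `[-1, 1] (EFin \o psi2) /\
  mu.-integrable `[-1, 1] (fun x => (psi2 x ^+ 2)%:E) /\
  (forall x, -1 <= x <= 1 -> psi1 x = Rint (-1) x psi2) /\
  (forall x, -1 <= x <= 1 -> psi x = Rint (-1) x psi1) /\
  psi1 1 = 0 /\ psi 1 = 0.

Definition pw (cp cm : R) (x : R) : R := if 0 < x then cp else cm.

Definition Efun (g rp rm mp mm B xi s : R) (psi psi1 psi2 : R -> R) : R :=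
  2^-1 * Rint (-1) 1 (fun x =>
      s * pw mp mm x * (4 * xi ^+ 2 * psi1 x ^+ 2 + (xi ^+ 2 * psi x + psi2 x) ^+ 2)
    + `|B| ^+ 2 * (xi ^+ 2 * psi1 x ^+ 2 + psi2 x ^+ 2))
  - 2^-1 * xi ^+ 2 * g * (rp - rm) * psi 0 ^+ 2.

Definition Jfun (rp rm xi : R) (psi psi1 : R -> R) : R :=
  2^-1 * Rint (-1) 1 (fun x => pw rp rm x * (xi ^+ 2 * psi x ^+ 2 + psi1 x ^+ 2)).

Definition alpha (g rp rm mp mm B xi s : R) : \bar R :=
  ereal_inf [set r | exists psi psi1 psi2, H02 psi psi1 psi2 /\
     Jfun rp rm xi psi psi1 = 1 /\ r = (Efun g rp rm mp mm B xi s psi psi1 psi2)%:E].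

Definition Bc2 (g rp rm : R) : \bar R :=
  ereal_sup [set r | exists psi psi1, H01 psi psi1 /\
     (exists x, -1 <= x <= 1 /\ psi x != 0) /\
     r = (g * (rp - rm) * psi 0 ^+ 2 / Rint (-1) 1 (fun x => psi1 x ^+ 2))%:E].

Definition xivc2 (g rp rm B : R) : \bar R :=
  ereal_inf [set r | exists psi psi1 psi2, H02 psi psi1 psi2 /\
     0 < g * (rp - rm) * psi 0 ^+ 2 - `|B| ^+ 2 * Rint (-1) 1 (fun x => psi1 x ^+ 2) /\
     r = (`|B| ^+ 2 * Rint (-1) 1 (fun x => psi2 x ^+ 2) /
          (g * (rp - rm) * psi 0 ^+ 2 - `|B| ^+ 2 * Rint (-1) 1 (fun x => psi1 x ^+ 2)))%:E].
End Defs.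

From Pilot Require Import Defs.
From HB Require Import structures.
From mathcomp Require Import all_boot all_order all_algebra.
From mathcomp Require Import all_classical all_reals all_analysis.
From mathcomp Require Import measurable_realfun ring lra.
Import Order.TTheory GRing.Theory Num.Theory.
Import numFieldNormedType.Exports.
Local Open Scope classical_set_scope.
Local Open Scope ring_scope.

(* Write 2 E_s(psi) = s V(psi) + (|B|^2 int psi''^2 - xi^2 D(psi)), where
   V >= 0 is the viscous energy and D(psi) = g[rho] psi(0)^2 - |B|^2 int psi'^2.
   In regime (i) the bracket is nonnegative for every admissible psi: if
   |B| >= |B|_c then D <= 0 by the definition of |B|_c (the trace inequality
   psi(0)^2 <= int psi'^2 makes psi admissible there whenever psi(0) != 0),
   and if xi^2 <= (|xi|^B_vc)^2 then xi^2 D <= |B|^2 int psi''^2 whenever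
   D > 0.  In regime (ii) some psi makes the bracket negative; then D > 0, so
   psi(0) != 0 and J(psi) > 0.  Since E_s and J are quadratic, rescaling psi
   to J = 1 gives alpha(s) <= E_s(psi) / J(psi), which is negative once
   s V(psi) is smaller than the negative bracket. *)

Section integrals_on_I11.
Context {R : realType}.
Local Notation mu := (@lebesgue_measure R).
Local Notation I11 := (`[-1, 1]%classic : set R).
Local Notation int11 f := (Defs.Rint (-1) 1 f).

Let measurable_I11 : measurable (I11 : set (measurableTypeR R)).
Proof. exact: measurable_itv. Qed.

Let finite_I11 : (mu I11 < +oo)%E.
Proof. by rewrite lebesgue_measure_itv/= ifT ?ltry// lte_fin; lra. Qed.

Let in_I11 (x : R) : I11 x = (-1 <= x <= 1).
Proof. by rewrite /= in_itv. Qed.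

Definition integrable11 (f : R -> R) := mu.-integrable I11 (EFin \o f).

Lemma bounded_in_le (A : set R) (f : R -> R) (K : R) :
  (forall x, A x -> `|f x| <= K) -> [bounded f x | x in A].
Proof.
move=> fK; exists K; split; first exact: num_real.
by move=> M KM x Ax; apply: le_trans (fK x Ax) (ltW KM).
Qed.

Lemma integrable11_bounded {f : R -> R} :
  measurable_fun I11 f -> [bounded f x | x in I11] -> integrable11 f.
Proof.
move=> mf bf.
by have := @measurable_bounded_integrable _ _ R mu f _ measurable_I11 finite_I11 mf bf.
Qed.

Lemma integrable11D {f h : R -> R} :
  integrable11 f -> integrable11 h -> integrable11 (fun x => f x + h x).
Proof. exact: integrableD. Qed.

Lemma integrable11Z (k : R) {f : R -> R} :
  integrable11 f -> integrable11 (fun x => k * f x).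
Proof. exact: integrableZl. Qed.

Lemma integrable11M {h f : R -> R} :
  measurable_fun I11 h -> [bounded h x | x in I11] ->
  integrable11 f -> integrable11 (fun x => h x * f x).
Proof.
by move=> mh bh fi; have := integrableMr measurable_I11 mh bh fi.
Qed.

Lemma int11D (f h : R -> R) : integrable11 f -> integrable11 h ->
  int11 (fun x => f x + h x) = int11 f + int11 h.
Proof. exact: RintegralD. Qed.

Lemma int11Z (k : R) (f : R -> R) : integrable11 f ->
  int11 (fun x => k * f x) = k * int11 f.
Proof. exact: RintegralZl. Qed.

Lemma int11_ge0 (f : R -> R) : (forall x, I11 x -> 0 <= f x) -> 0 <= int11 f.
Proof. by move=> f0; rewrite Rintegral_ge0. Qed.

Lemma le_int11 (f h : R -> R) : integrable11 f -> integrable11 h ->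
  (forall x, I11 x -> f x <= h x) -> int11 f <= int11 h.
Proof. exact: le_Rintegral. Qed.

Lemma eq_int11 (f h : R -> R) : (forall x, I11 x -> f x = h x) -> int11 f = int11 h.
Proof. by move=> fh; apply: eq_Rintegral => x /[!inE]; exact: fh. Qed.

Lemma primitive11_regular {f h : R -> R} : integrable11 f ->
  (forall x, -1 <= x <= 1 -> h x = Defs.Rint (-1) x f) ->
  measurable_fun I11 h /\ [bounded h x | x in I11].
Proof.
move=> fi hf; pose F x := Defs.Rint (-1) x f.
have cF : {within `[-1, 1], continuous F} by exact: parameterized_integral_continuous.
have hF : {in I11, F =1 h} by move=> x; rewrite inE in_I11 => /hf.
split.
  exact: eq_measurable_fun hF (subspace_continuous_measurable_fun measurable_I11 cF).
have le11 : (-1 : R) <= 1 by lra.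
have [c1 _ Fc1] := EVT_max le11 cF; have [c2 _ Fc2] := EVT_min le11 cF.
apply: (@bounded_in_le _ _ (`|F c1| + `|F c2|)) => x x11.
have x11' : x \in `[-1, 1] by rewrite inE.
rewrite -hF ?inE//; have := Fc1 x x11'; have := Fc2 x x11'.
have := ler_norm (F c1); have := ler_norm (- F c2); rewrite normrN.
have := normr_ge0 (F c1); have := normr_ge0 (F c2).
by move=> *; rewrite ler_norml; apply/andP; split; lra.
Qed.

Lemma H02_regular {psi psi1 psi2 : R -> R} : H02 psi psi1 psi2 ->
  [/\ measurable_fun I11 psi, [bounded psi x | x in I11],
      measurable_fun I11 psi1 & [bounded psi1 x | x in I11]].
Proof.
case=> i2 [_ [e1 [e0 _]]].
have [m1 b1] := primitive11_regular i2 e1.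
by have [m0 b0] := primitive11_regular (integrable11_bounded m1 b1) e0.
Qed.

Lemma H02_H01 {psi psi1 psi2 : R -> R} : H02 psi psi1 psi2 -> H01 psi psi1.
Proof.
move=> H; have [_ _ m1 b1] := H02_regular H.
case: H => _ [_ [_ [e0 [_ psi1_eq0]]]].
split; first exact: integrable11_bounded.
by split; first exact: integrable11M m1 b1 (integrable11_bounded m1 b1).
Qed.

Lemma H02_integrable {psi psi1 psi2 : R -> R} : H02 psi psi1 psi2 ->
  [/\ integrable11 (fun x => psi1 x ^+ 2), integrable11 (fun x => psi2 x ^+ 2),
      integrable11 (fun x => psi x ^+ 2) & integrable11 (fun x => psi x * psi2 x)].
Proof.
move=> H; have [m0 b0 _ _] := H02_regular H.
have [_ [i11 _]] := H02_H01 H.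
case: H => i2 [i22 _]; split => //.
  exact: integrable11M m0 b0 (integrable11_bounded m0 b0).
exact: integrable11M.
Qed.

Lemma H01_sqr0_le {psi psi1 : R -> R} : H01 psi psi1 ->
  psi 0 ^+ 2 <= int11 (fun x => psi1 x ^+ 2).
Proof.
case=> i1 [i11 [e0 _]].
pose J : set R := `[-1, 0]%classic.
have mJ : measurable (J : set (measurableTypeR R)) by exact: measurable_itv.
have JI : J `<=` I11.
  by move=> x; rewrite /J /= !in_itv/= => /andP[? ?]; apply/andP; split; lra.
have onJ f : integrable11 f -> mu.-integrable J (EFin \o f).
  exact: integrableS measurable_I11 mJ JI.
have muJ : mu J = 1%:E by rewrite lebesgue_measure_itv/= lte_fin ltrN10 add0e opprK.
have cstJ k : mu.-integrable J (EFin \o cst k).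
  have finJ : (mu J < +oo)%E by rewrite muJ ltry.
  apply: (measurable_bounded_integrable mJ finJ) => //.
  exact: (@bounded_in_le _ _ `|k|).
set A := psi 0.
have eA : A = Rintegral mu J psi1 by rewrite /A e0 //; lra.
have : 0 <= Rintegral mu J (fun x => (psi1 x - A) ^+ 2).
  by apply: Rintegral_ge0 => x _; exact: sqr_ge0.
(* [-1, 0] has length 1 and [A] is the mean of [psi1] on it. *)
have -> : Rintegral mu J (fun x => (psi1 x - A) ^+ 2) =
    Rintegral mu J (fun x => psi1 x ^+ 2 + (- 2 * A) * psi1 x + cst (A ^+ 2) x).
  by apply: eq_Rintegral => x _; rewrite /cst; ring.
rewrite !RintegralD //; last 3 first.
- exact: onJ.
- exact: integrableZl (onJ _ i1).
- exact: integrableD (onJ _ i11) (integrableZl _ _ (onJ _ i1)).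
rewrite RintegralZl ?Rintegral_cst //; last exact: onJ.
set m := fine _; have -> : m = 1 by exact: (congr1 fine muJ).
rewrite -eA mulr1 => sqrA_le.
apply: le_trans (_ : Rintegral mu J (fun x => psi1 x ^+ 2) <= _); first lra.
apply: fine_le; [exact: integrable_fin_num (onJ _ i11) | exact: integrable_fin_num i11 |].
apply: ge0_subset_integral => //; first by case/integrableP: i11.
by move=> x _; rewrite lee_fin sqr_ge0.
Qed.

Lemma measurable_pw (cp cm : R) (D : set R) : measurable_fun D (pw cp cm).
Proof.
apply: measurable_funTS; apply: measurable_fun_ifT => //.
exact: (measurable_fun_ltr (measurable_cst _) (@measurable_id _ _ _)).
Qed.

Lemma bounded_pw (cp cm : R) (D : set R) : [bounded pw cp cm x | x in D].
Proof.
apply: (@bounded_in_le _ _ (`|cp| + `|cm|)) => x _.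
by have := normr_ge0 cp; have := normr_ge0 cm; rewrite /pw; case: ifP => _ *; lra.
Qed.

Lemma integrable11_pwM (cp cm : R) {f : R -> R} :
  integrable11 f -> integrable11 (fun x => pw cp cm x * f x).
Proof. exact: integrable11M (measurable_pw _ _ _) (bounded_pw _ _ _). Qed.

Lemma int11_sqrZ (c : R) {f : R -> R} : integrable11 (fun x => f x ^+ 2) ->
  int11 (fun x => (c * f x) ^+ 2) = c ^+ 2 * int11 (fun x => f x ^+ 2).
Proof. by move=> fi; rewrite -int11Z //; apply: eq_int11 => x _; rewrite exprMn. Qed.

Lemma RintZ_sub (c x : R) {f : R -> R} : integrable11 f -> -1 <= x <= 1 ->
  Defs.Rint (-1) x (fun t => c * f t) = c * Defs.Rint (-1) x f.
Proof.
move=> fi /andP[_ x1]; apply: RintegralZl => //.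
apply: integrableS fi => //.
by move=> y /=; rewrite !in_itv/= => /andP[? ?]; apply/andP; split; lra.
Qed.

Lemma H02Z (c : R) {psi psi1 psi2 : R -> R} : H02 psi psi1 psi2 ->
  H02 (fun x => c * psi x) (fun x => c * psi1 x) (fun x => c * psi2 x).
Proof.
move=> H; have [i1 _] := H02_H01 H.
case: H => i2 [i22 [e1 [e0 [psi1_1 psi_1]]]].
split; first exact: integrable11Z.
split.
  have i22' : integrable11 (fun x => (c * psi2 x) ^+ 2).
    have := integrable11Z (c ^+ 2) i22.
    by congr integrable11; apply/funext => x; rewrite exprMn.
  exact: i22'.
split; first by move=> x x11; rewrite e1 // RintZ_sub.
split; first by move=> x x11; rewrite e0 // RintZ_sub.
by rewrite psi1_1 psi_1 mulr0.
Qed.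

End integrals_on_I11.

Section energy.
Context {R : realType} {g rp rm mp mm B xi : R}.
Local Notation int11 f := (Defs.Rint (-1) 1 f).
Local Notation Efun := (Efun g rp rm mp mm B xi).
Local Notation Jfun := (Jfun rp rm xi).

Definition viscous_energy (psi psi1 psi2 : R -> R) : R :=
  int11 (fun x => pw mp mm x *
    (4 * xi ^+ 2 * psi1 x ^+ 2 + (xi ^+ 2 * psi x + psi2 x) ^+ 2)).

Definition magnetic_gap (psi psi1 : R -> R) : R :=
  g * (rp - rm) * psi 0 ^+ 2 - `|B| ^+ 2 * int11 (fun x => psi1 x ^+ 2).

Lemma integrable11_viscous {psi psi1 psi2 : R -> R} : H02 psi psi1 psi2 ->
  integrable11 (fun x => pw mp mm x *
    (4 * xi ^+ 2 * psi1 x ^+ 2 + (xi ^+ 2 * psi x + psi2 x) ^+ 2)).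
Proof.
move=> H; have [i1 i2 i0 i02] := H02_integrable H; apply: integrable11_pwM.
have := integrable11D (integrable11D (integrable11D (integrable11Z (4 * xi ^+ 2) i1)
  (integrable11Z (xi ^+ 4) i0)) (integrable11Z (2 * xi ^+ 2) i02)) i2.
by congr integrable11; apply/funext => x; ring.
Qed.

Lemma viscous_energy_ge0 (psi psi1 psi2 : R -> R) :
  0 <= mp -> 0 <= mm -> 0 <= viscous_energy psi psi1 psi2.
Proof.
move=> mp_ge0 mm_ge0; apply: int11_ge0 => x _; apply: mulr_ge0.
  by rewrite /pw; case: ifP.
by rewrite addr_ge0 ?sqr_ge0 // mulr_ge0 ?sqr_ge0 // mulr_ge0 ?sqr_ge0.
Qed.

Lemma Efun_decomp (s : R) {psi psi1 psi2 : R -> R} : H02 psi psi1 psi2 ->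
  Efun s psi psi1 psi2 = 2^-1 * s * viscous_energy psi psi1 psi2 +
  2^-1 * (`|B| ^+ 2 * int11 (fun x => psi2 x ^+ 2) - xi ^+ 2 * magnetic_gap psi psi1).
Proof.
move=> H; have [i1 i2 _ _] := H02_integrable H.
have iV := integrable11_viscous H.
have iB1 := integrable11Z (`|B| ^+ 2 * xi ^+ 2) i1.
have iB2 := integrable11Z (`|B| ^+ 2) i2.
rewrite /Efun /viscous_energy /magnetic_gap.
rewrite (@eq_int11 _ _ (fun x => s * (pw mp mm x *
    (4 * xi ^+ 2 * psi1 x ^+ 2 + (xi ^+ 2 * psi x + psi2 x) ^+ 2)) +
  ((`|B| ^+ 2 * xi ^+ 2) * psi1 x ^+ 2 + `|B| ^+ 2 * psi2 x ^+ 2))); last first.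
  by move=> x _; ring.
rewrite int11D; [|exact: integrable11Z|exact: integrable11D iB1 iB2].
by rewrite int11D ?int11Z //; ring.
Qed.

Lemma viscous_energyZ (c : R) {psi psi1 psi2 : R -> R} : H02 psi psi1 psi2 ->
  viscous_energy (fun x => c * psi x) (fun x => c * psi1 x) (fun x => c * psi2 x) =
  c ^+ 2 * viscous_energy psi psi1 psi2.
Proof.
move=> H; rewrite /viscous_energy -int11Z; last exact: integrable11_viscous H.
by apply: eq_int11 => x _; ring.
Qed.

Lemma EfunZ (s c : R) {psi psi1 psi2 : R -> R} : H02 psi psi1 psi2 ->
  Efun s (fun x => c * psi x) (fun x => c * psi1 x) (fun x => c * psi2 x) =
  c ^+ 2 * Efun s psi psi1 psi2.
Proof.
move=> H; have [i1 i2 _ _] := H02_integrable H.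
have Hc := H02Z c H.
by rewrite !Efun_decomp // viscous_energyZ // /magnetic_gap !int11_sqrZ //; ring.
Qed.

Lemma JfunZ (c : R) {psi psi1 psi2 : R -> R} : H02 psi psi1 psi2 ->
  Jfun (fun x => c * psi x) (fun x => c * psi1 x) = c ^+ 2 * Jfun psi psi1.
Proof.
move=> H; have [i1 _ i0 _] := H02_integrable H.
have iJ := integrable11_pwM rp rm (integrable11D (integrable11Z (xi ^+ 2) i0) i1).
rewrite /Jfun [RHS]mulrCA; congr (_ * _).
by rewrite -int11Z //; apply: eq_int11 => x _; ring.
Qed.

Lemma Jfun_gt0 {psi psi1 psi2 : R -> R} : 0 < rm -> rm <= rp ->
  H02 psi psi1 psi2 -> psi 0 != 0 -> 0 < Jfun psi psi1.
Proof.
move=> rm_gt0 rm_le_rp H psi0_neq0; have [i1 _ i0 _] := H02_integrable H.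
have iJ := integrable11_pwM rp rm (integrable11D (integrable11Z (xi ^+ 2) i0) i1).
have : rm * int11 (fun x => psi1 x ^+ 2) <= 2 * Jfun psi psi1.
  rewrite /Jfun mulrA divff ?pnatr_eq0 // mul1r -int11Z //.
  apply: le_int11 (integrable11Z rm i1) iJ _ => x _; have := sqr_ge0 (psi1 x).
  have : 0 <= xi ^+ 2 * psi x ^+ 2 by rewrite mulr_ge0 ?sqr_ge0.
  by rewrite /pw; case: ifP => _ *; nra.
have := H01_sqr0_le (H02_H01 H).
have : 0 < psi 0 ^+ 2 by rewrite exprn_even_gt0.
nra.
Qed.

Lemma alpha_le_Rayleigh (s : R) {psi psi1 psi2 : R -> R} : H02 psi psi1 psi2 ->
  0 < Jfun psi psi1 ->
  (alpha g rp rm mp mm B xi s <= (Efun s psi psi1 psi2 / Jfun psi psi1)%:E)%E.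
Proof.
move=> H J_gt0; pose c := (Num.sqrt (Jfun psi psi1))^-1.
have c2 : c ^+ 2 = (Jfun psi psi1)^-1 by rewrite exprVn sqr_sqrtr ?ltW.
apply: ereal_inf_lbound.
exists (fun x => c * psi x), (fun x => c * psi1 x), (fun x => c * psi2 x).
split; first exact: H02Z.
by rewrite (JfunZ c H) EfunZ // c2 mulVf ?gt_eqF // mulrC.
Qed.

Lemma magnetic_gap_le0_of_root0 (psi psi1 : R -> R) :
  psi 0 = 0 -> magnetic_gap psi psi1 <= 0.
Proof.
move=> psi0_eq0; rewrite /magnetic_gap psi0_eq0 expr0n mulr0 sub0r oppr_le0.
rewrite mulr_ge0 ?sqr_ge0 //.
by apply: int11_ge0 => x _; exact: sqr_ge0.
Qed.

Lemma magnetic_gap_le0 {psi psi1 psi2 : R -> R} : H02 psi psi1 psi2 ->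
  (Bc2 g rp rm <= (`|B| ^+ 2)%:E)%E -> magnetic_gap psi psi1 <= 0.
Proof.
move=> H Bc2_le; have [psi0_eq0|psi0_neq0] := eqVneq (psi 0) 0.
  exact: magnetic_gap_le0_of_root0.
have I1_gt0 : 0 < int11 (fun x => psi1 x ^+ 2).
  by apply: lt_le_trans (H01_sqr0_le (H02_H01 H)); rewrite exprn_even_gt0.
have : ((g * (rp - rm) * psi 0 ^+ 2 / int11 (fun x => psi1 x ^+ 2))%:E <= Bc2 g rp rm)%E.
  apply: ereal_sup_ubound; exists psi, psi1; split; first exact: H02_H01 H.
  by split => //; exists 0; split => //; lra.
move=> /le_trans/(_ Bc2_le); rewrite lee_fin ler_pdivrMr //.
by rewrite /magnetic_gap subr_le0.
Qed.

(* The [s]-independent part of [2 E_s] is nonnegative. *)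
Definition magnetically_stable (psi psi1 psi2 : R -> R) : Prop :=
  xi ^+ 2 * magnetic_gap psi psi1 <= `|B| ^+ 2 * int11 (fun x => psi2 x ^+ 2).

Lemma magnetically_stable_of_gap_le0 (psi psi1 psi2 : R -> R) :
  magnetic_gap psi psi1 <= 0 -> magnetically_stable psi psi1 psi2.
Proof.
move=> gap_le0; apply: le_trans (_ : 0 <= _); first by rewrite mulr_ge0_le0 ?sqr_ge0.
by rewrite mulr_ge0 ?sqr_ge0 //; apply: int11_ge0 => x _; exact: sqr_ge0.
Qed.

Lemma magnetically_stable_of_Bc2 {psi psi1 psi2 : R -> R} : H02 psi psi1 psi2 ->
  (Bc2 g rp rm <= (`|B| ^+ 2)%:E)%E -> magnetically_stable psi psi1 psi2.
Proof.
by move=> H Bc2_le; apply: magnetically_stable_of_gap_le0; exact: magnetic_gap_le0 H Bc2_le.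
Qed.

Lemma magnetically_stable_of_xivc2 {psi psi1 psi2 : R -> R} : H02 psi psi1 psi2 ->
  ((xi ^+ 2)%:E <= xivc2 g rp rm B)%E -> magnetically_stable psi psi1 psi2.
Proof.
move=> H xi_le; have [gap_le0|gap_gt0] := lerP (magnetic_gap psi psi1) 0.
  exact: magnetically_stable_of_gap_le0.
have : (xivc2 g rp rm B <=
    (`|B| ^+ 2 * int11 (fun x => psi2 x ^+ 2) / magnetic_gap psi psi1)%:E)%E.
  by apply: ereal_inf_lbound; exists psi, psi1, psi2.
by move=> /(le_trans xi_le); rewrite lee_fin ler_pdivlMr.
Qed.

Lemma Efun_ge0 (s : R) {psi psi1 psi2 : R -> R} : 0 <= s -> 0 <= mp -> 0 <= mm ->
  H02 psi psi1 psi2 -> magnetically_stable psi psi1 psi2 -> 0 <= Efun s psi psi1 psi2.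
Proof.
move=> s_ge0 mp_ge0 mm_ge0 H stable; rewrite Efun_decomp //.
have := mulr_ge0 s_ge0 (viscous_energy_ge0 psi psi1 psi2 mp_ge0 mm_ge0).
by move: stable; rewrite /magnetically_stable; lra.
Qed.

Lemma Efun_lt0_small {psi psi1 psi2 : R -> R} : 0 <= mp -> 0 <= mm ->
  H02 psi psi1 psi2 -> ~ magnetically_stable psi psi1 psi2 ->
  exists s0, 0 < s0 /\ forall s, s <= s0 -> Efun s psi psi1 psi2 < 0.
Proof.
move=> mp_ge0 mm_ge0 H /negP; rewrite -ltNge -subr_gt0.
set N := _ - _ => N_gt0; set V := viscous_energy psi psi1 psi2.
have V_ge0 : 0 <= V by exact: viscous_energy_ge0.
have V1_gt0 : 0 < V + 1 by rewrite ltr_wpDl.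
exists (N / (V + 1)); split => [|s s_le]; first by rewrite divr_gt0.
have : s * V <= N / (V + 1) * V by rewrite ler_wpM2r.
have : N / (V + 1) * V < N.
  by rewrite -[X in _ < X](divfK (lt0r_neq0 V1_gt0)) ltr_pM2l ?divr_gt0 ?ltrDl.
rewrite Efun_decomp // -/V /N; lra.
Qed.

Lemma alpha_ge0 (s : R) : 0 <= s -> 0 <= mp -> 0 <= mm ->
  (forall psi psi1 psi2, H02 psi psi1 psi2 -> magnetically_stable psi psi1 psi2) ->
  (0%:E <= alpha g rp rm mp mm B xi s)%E.
Proof.
move=> s_ge0 mp_ge0 mm_ge0 stable.
apply: le_ereal_inf_tmp => _ [psi [psi1 [psi2 [H [_ ->]]]]].
by rewrite lee_fin; apply: Efun_ge0 => //; exact: stable.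
Qed.

Lemma alpha_lt0 : 0 < rm -> rm <= rp -> 0 <= mp -> 0 <= mm ->
  (xivc2 g rp rm B < (xi ^+ 2)%:E)%E ->
  exists s0, 0 < s0 /\ forall s, s <= s0 -> (alpha g rp rm mp mm B xi s < 0%:E)%E.
Proof.
move=> rm_gt0 rm_le_rp mp_ge0 mm_ge0.
move=> /ereal_inf_lt[_ [psi [psi1 [psi2 [H [gap_gt0 ->]]]]]].
rewrite lte_fin ltr_pdivrMr // ltNge => /negP unstable.
have psi0_neq0 : psi 0 != 0.
  apply: contraTneq gap_gt0 => psi0_eq0; rewrite -leNgt.
  exact: magnetic_gap_le0_of_root0.
have J_gt0 := Jfun_gt0 rm_gt0 rm_le_rp H psi0_neq0.
have [s0 [s0_gt0 E_lt0]] := Efun_lt0_small mp_ge0 mm_ge0 H unstable.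
exists s0; split => // s s_le.
apply: le_lt_trans (alpha_le_Rayleigh s H J_gt0) _.
by rewrite lte_fin pmulr_llt0 ?invr_gt0 // E_lt0.
Qed.

End energy.

Theorem lemma3p4 (R : realType) (g rp rm mp mm B xi : R) :
  0 < g -> 0 < rm -> rm < rp -> 0 < mp -> 0 < mm -> B != 0 -> xi != 0 ->
  (* (i) *)
  ((Bc2 g rp rm <= (`|B| ^+ 2)%:E)%E \/
   ((`|B| ^+ 2)%:E < Bc2 g rp rm /\ ((xi ^+ 2)%:E <= xivc2 g rp rm B))%E ->
   forall s : R, 0 <= s -> (0%:E <= alpha g rp rm mp mm B xi s)%E) /\
  (* (ii) *)
  (((`|B| ^+ 2)%:E < Bc2 g rp rm)%E -> ((xivc2 g rp rm B < (xi ^+ 2)%:E))%E ->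
   exists s0 : R, 0 < s0 /\
     forall s : R, 0 < s -> s <= s0 -> (alpha g rp rm mp mm B xi s < 0%:E)%E).
Proof.
move=> _ rm_gt0 rm_lt_rp /ltW mp_ge0 /ltW mm_ge0 _ _; split.
  move=> stable_regime s s_ge0; apply: alpha_ge0 => // psi psi1 psi2 H.
  case: stable_regime => [Bc2_le|[_ xi_le]].
    exact: magnetically_stable_of_Bc2 H Bc2_le.
  exact: magnetically_stable_of_xivc2 H xi_le.
move=> _ /(alpha_lt0 rm_gt0 (ltW rm_lt_rp) mp_ge0 mm_ge0) [s0 [s0_gt0 alpha_lt0]].
by exists s0; split => // s _ /alpha_lt0.
Qed.
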